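(* Let $E$ be a finite graph, i.e. a metric continuum that is the union of finitely many arcs $E_1,\dots,E_r$ ($r\ge1$), any two of which are either disjoint or intersect only in one or both of their end points. Then there exists an onto map $F:E\to E$ that is topologically transitive (indeed has a dense orbit) and has a dense set of periodic points; $F$ is chaotic on $E$.
   Context: A map $g$ on a metric space $(Z,d)$ is chaotic (Devaney) if it is onto, topologically transitive (for nonempty open $U,V$ there is $n>0$ with $g^n(U)\cap V\neq\emptyset$), has a dense set of periodic points, and is sensitive to initial conditions (there is $\eta>0$ such that for every $x$ and every neighbourhood $N$ of $x$ there are $y\in N$ and $n\ge0$ with $d(g^n(x),g^n(y))>\eta$). An arc is a space homeomorphic to $[0,1]$; its end points are the images of $0$ and $1$. *)

From Stdlib Require Import Reals List.
Open Scope R_scope.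

Definition is_metric {X : Type} (d : X -> X -> R) : Prop :=
  (forall x y, 0 <= d x y) /\
  (forall x y, d x y = 0 <-> x = y) /\
  (forall x y, d x y = d y x) /\
  (forall x y z, d x z <= d x y + d y z).

Definition is_open {X : Type} (d : X -> X -> R) (U : X -> Prop) : Prop :=
  forall x, U x -> exists eps, 0 < eps /\ forall y, d x y < eps -> U y.

Definition is_nbhd {X : Type} (d : X -> X -> R) (x : X) (N : X -> Prop) : Prop :=
  exists eps, 0 < eps /\ forall y, d x y < eps -> N y.

Definition is_compact {X : Type} (d : X -> X -> R) : Prop :=
  forall (I : Type) (U : I -> X -> Prop),
    (forall i, is_open d (U i)) -> (forall x, exists i, U i x) ->
    exists l : list I, forall x, exists i, In i l /\ U i x.

Definition is_connected {X : Type} (d : X -> X -> R) : Prop :=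
  forall U V : X -> Prop, is_open d U -> is_open d V ->
    (forall x, U x \/ V x) -> (forall x, ~ (U x /\ V x)) ->
    (forall x, U x) \/ (forall x, V x).

Definition is_continuum {X : Type} (d : X -> X -> R) : Prop :=
  is_metric d /\ (exists x : X, True) /\ is_compact d /\ is_connected d.

Definition continuous {X : Type} (d : X -> X -> R) (f : X -> X) : Prop :=
  forall x eps, 0 < eps -> exists delta, 0 < delta /\
    forall y, d x y < delta -> d (f x) (f y) < eps.

(* A is an arc with end points a = h 0 and b = h 1, where h : [0,1] -> A is a
   homeomorphism with inverse g. *)
Definition is_arc_with {X : Type} (d : X -> X -> R) (A : X -> Prop) (a b : X) : Prop :=
  exists (h : R -> X) (g : X -> R),
    (forall t, 0 <= t <= 1 -> A (h t)) /\
    (forall x, A x -> 0 <= g x <= 1) /\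
    (forall t, 0 <= t <= 1 -> g (h t) = t) /\
    (forall x, A x -> h (g x) = x) /\
    (forall t eps, 0 <= t <= 1 -> 0 < eps -> exists delta, 0 < delta /\
       forall s, 0 <= s <= 1 -> Rabs (s - t) < delta -> d (h t) (h s) < eps) /\
    (forall x eps, A x -> 0 < eps -> exists delta, 0 < delta /\
       forall y, A y -> d x y < delta -> Rabs (g y - g x) < eps) /\
    h 0 = a /\ h 1 = b.

Definition is_finite_graph {X : Type} (d : X -> X -> R) : Prop :=
  exists (r : nat) (E : nat -> X -> Prop) (a b : nat -> X),
    (1 <= r)%nat /\
    (forall i, (i < r)%nat -> is_arc_with d (E i) (a i) (b i)) /\
    (forall x, exists i, (i < r)%nat /\ E i x) /\
    (forall i j x, (i < r)%nat -> (j < r)%nat -> i <> j -> E i x -> E j x ->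
       (x = a i \/ x = b i) /\ (x = a j \/ x = b j)).

Fixpoint iter {X : Type} (n : nat) (f : X -> X) (x : X) : X :=
  match n with O => x | S k => f (iter k f x) end.

Definition onto {X : Type} (f : X -> X) : Prop := forall y, exists x, f x = y.

Definition top_transitive {X : Type} (d : X -> X -> R) (f : X -> X) : Prop :=
  forall U V : X -> Prop, is_open d U -> is_open d V ->
    (exists u, U u) -> (exists v, V v) ->
    exists n, (0 < n)%nat /\ exists u, U u /\ V (iter n f u).

Definition has_dense_orbit {X : Type} (d : X -> X -> R) (f : X -> X) : Prop :=
  exists x, forall U : X -> Prop, is_open d U -> (exists u, U u) ->
    exists n, U (iter n f x).

Definition periodic {X : Type} (f : X -> X) (x : X) : Prop :=
  exists n, (0 < n)%nat /\ iter n f x = x.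

Definition dense_periodic {X : Type} (d : X -> X -> R) (f : X -> X) : Prop :=
  forall U : X -> Prop, is_open d U -> (exists u, U u) ->
    exists x, U x /\ periodic f x.

Definition sensitive {X : Type} (d : X -> X -> R) (f : X -> X) : Prop :=
  exists eta, 0 < eta /\ forall x N, is_nbhd d x N ->
    exists y n, N y /\ d (iter n f x) (iter n f y) > eta.

Definition chaotic {X : Type} (d : X -> X -> R) (f : X -> X) : Prop :=
  onto f /\ top_transitive d f /\ dense_periodic d f /\ sensitive d f.

(* By connectedness the edges can be arranged into a closed walk traversing every edge:
   start by running along one edge and back, and repeatedly splice in a back-and-forth detour
   along an uncovered edge at a vertex of the walk. Let W : [0,1] -> E run through this walk of
   M >= 2 oriented edges with constant speed, and let F map each edge E_i onto the whole graph by
   h_i t |-> W t; this is well defined because W 0 = W 1. Then F^n maps each of the M^n subarcs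
   h_i [j/M^n, (j+1)/M^n] homeomorphically onto an edge, so F^(n+1) maps it onto E. Every open
   set contains such a subarc, which gives surjectivity, transitivity and sensitivity; the
   intermediate value theorem gives a periodic point in each subarc, and nested intervals run
   through a countable base give a point with a dense orbit. *)

From Stdlib Require Import Reals List.
From Stdlib Require Import Cantor Lra Lia ClassicalEpsilon Classical.
Open Scope R_scope.
Set Implicit Arguments.
Unset Strict Implicit.

Lemma iter_Sr {T : Type} n (f : T -> T) x : iter (S n) f x = iter n f (f x).
Proof. induction n as [|n IH]; simpl in *; [|rewrite <- IH]; reflexivity. Qed.

Lemma iter_continuous {X : Type} (d : X -> X -> R) (f : X -> X) n :
  continuous d f -> continuous d (iter n f).
Proof.
  intros Hf. induction n as [|n IH]; intros x eps He; [exists eps; auto|].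
  destruct (Hf (iter n f x) eps He) as [d1 [Hd1 H1]].
  destruct (IH x d1 Hd1) as [d2 [Hd2 H2]]. exists d2; split; [exact Hd2|].
  intros y Hy. apply H1, H2, Hy.
Qed.

Lemma exists_pos_below_all (Q : nat -> R -> Prop) n :
  (forall j a b, Q j a -> 0 < b -> b <= a -> Q j b) ->
  (forall j, (j < n)%nat -> exists a, 0 < a /\ Q j a) ->
  exists a, 0 < a /\ forall j, (j < n)%nat -> Q j a.
Proof.
  intros Qdown. induction n as [|n IH]; intros HQ.
  - exists 1; split; [lra | intros; lia].
  - destruct IH as [a [Ha Qa]]; [intros j Hj; apply HQ; lia|].
    destruct (HQ n) as [b [Hb Qb]]; [lia|].
    assert (Hab : 0 < Rmin a b) by (apply Rmin_pos; assumption).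
    exists (Rmin a b); split; [exact Hab|].
    intros j Hj; destruct (Nat.eq_dec j n) as [->|Hjn].
    + apply Qdown with b; [exact Qb | exact Hab | apply Rmin_r].
    + apply Qdown with a; [apply Qa; lia | exact Hab | apply Rmin_l].
Qed.

Lemma nat_interval_cover m x : 0 <= x <= INR (S m) ->
  exists j, (j <= m)%nat /\ INR j <= x <= INR j + 1.
Proof.
  revert x; induction m as [|m IH]; intros x Hx.
  - exists O; simpl in *; split; [lia | lra].
  - destruct (Rle_dec x (INR (S m))) as [Hle|Hgt].
    + destruct (IH x) as [j [Hj Hx']]; [lra|]. exists j; split; [lia | exact Hx'].
    + exists (S m); split; [lia|]. rewrite (S_INR (S m)) in Hx; lra.
Qed.

Lemma div_range01 a b : 0 <= a -> a <= b -> 0 < b -> 0 <= a / b <= 1.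
Proof.
  intros Ha Hab Hb. split.
  - apply Rmult_le_pos; [exact Ha | left; apply Rinv_0_lt_compat, Hb].
  - apply Rmult_le_reg_r with b; [exact Hb|]. unfold Rdiv.
    rewrite Rmult_assoc, Rinv_l, Rmult_1_r, Rmult_1_l by lra. exact Hab.
Qed.

Definition clamp01 t := Rmax 0 (Rmin 1 t).

Lemma clamp01_id t : 0 <= t <= 1 -> clamp01 t = t.
Proof. intros. unfold clamp01, Rmax, Rmin. repeat destruct Rle_dec; lra. Qed.

Lemma clamp01_range t : 0 <= clamp01 t <= 1.
Proof. unfold clamp01, Rmax, Rmin. repeat destruct Rle_dec; lra. Qed.

Lemma clamp01_dist t c : 0 <= c <= 1 -> Rabs (clamp01 t - c) <= Rabs (t - c).
Proof.
  intros. unfold clamp01, Rmax, Rmin. repeat destruct Rle_dec;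
  unfold Rabs; repeat destruct Rcase_abs; lra.
Qed.

Definition cont_on {X : Type} (d : X -> X -> R) (f : R -> X) (a b : R) : Prop :=
  forall t eps, a <= t <= b -> 0 < eps -> exists delta, 0 < delta /\
    forall s, a <= s <= b -> Rabs (s - t) < delta -> d (f t) (f s) < eps.

Section ContOn.
Variables (X : Type) (d : X -> X -> R).

Lemma cont_on_ext (f f' : R -> X) a b :
  (forall t, a <= t <= b -> f t = f' t) -> cont_on d f a b -> cont_on d f' a b.
Proof.
  intros Hff' Hf t eps Ht He. destruct (Hf t eps Ht He) as [del [Hdel Hs]].
  exists del; split; [exact Hdel|]. intros s Hs' Hst.
  rewrite <- !Hff' by assumption. auto.
Qed.

Lemma cont_on_shift (f : R -> X) a b c :
  cont_on d f a b -> cont_on d (fun t => f (t - c)) (a + c) (b + c).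
Proof.
  intros Hf t eps Ht He. destruct (Hf (t - c) eps ltac:(lra) He) as [del [Hdel Hs]].
  exists del; split; [exact Hdel|]. intros s Hs' Hst.
  apply Hs; [lra|]. replace (s - c - (t - c)) with (s - t) by ring. exact Hst.
Qed.

Lemma cont_on_scale (f : R -> X) a b k : 0 < k ->
  cont_on d f (k * a) (k * b) -> cont_on d (fun t => f (k * t)) a b.
Proof.
  intros Hk Hf t eps Ht He.
  destruct (Hf (k * t) eps ltac:(split; nra) He) as [del [Hdel Hs]].
  exists (del / k); split; [apply Rdiv_lt_0_compat; lra|].
  intros s Hs' Hst. apply Hs; [split; nra|].
  replace (k * s - k * t) with (k * (s - t)) by ring.
  rewrite Rabs_mult, (Rabs_right k) by lra.
  apply (Rmult_lt_compat_l k) in Hst; [|lra].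
  replace (k * (del / k)) with del in Hst by (field; lra). exact Hst.
Qed.

Lemma cont_on_paste (f : R -> X) a b c : a <= b <= c ->
  cont_on d f a b -> cont_on d f b c -> cont_on d f a c.
Proof.
  intros Habc Hl Hr t eps Ht He.
  destruct (Rlt_or_le t b) as [Htb|Hbt]; [|destruct (Rle_lt_or_eq_dec b t Hbt) as [Hbt'|<-]].
  - destruct (Hl t eps ltac:(lra) He) as [del [Hdel Hs]].
    exists (Rmin del (b - t)); split; [apply Rmin_pos; lra|].
    intros s Hs' Hst. pose proof (Rmin_l del (b - t)); pose proof (Rmin_r del (b - t)).
    apply Hs; [|lra]. split; [lra|]. apply Rabs_def2 in Hst; lra.
  - destruct (Hr t eps ltac:(lra) He) as [del [Hdel Hs]].
    exists (Rmin del (t - b)); split; [apply Rmin_pos; lra|].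
    intros s Hs' Hst. pose proof (Rmin_l del (t - b)); pose proof (Rmin_r del (t - b)).
    apply Hs; [|lra]. split; [|lra]. apply Rabs_def2 in Hst; lra.
  - destruct (Hl b eps ltac:(lra) He) as [del1 [Hdel1 Hs1]].
    destruct (Hr b eps ltac:(lra) He) as [del2 [Hdel2 Hs2]].
    exists (Rmin del1 del2); split; [apply Rmin_pos; lra|].
    intros s Hs' Hst. pose proof (Rmin_l del1 del2); pose proof (Rmin_r del1 del2).
    destruct (Rle_dec s b); [apply Hs1 | apply Hs2]; lra.
Qed.

End ContOn.

Lemma nested_intervals_common_point (Q : nat -> R -> Prop) :
  (forall m a b, 0 <= a < b -> b <= 1 ->
     exists a' b', a <= a' < b' /\ b' <= b /\ forall s, a' <= s <= b' -> Q m s) ->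
  exists s, forall m, Q m s.
Proof.
  intros Hshrink.
  pose (good m (ab : R * R) (ab' : R * R) :=
    0 <= fst ab < snd ab -> snd ab <= 1 ->
    fst ab <= fst ab' < snd ab' /\ snd ab' <= snd ab /\
    forall s, fst ab' <= s <= snd ab' -> Q m s).
  assert (Hstep : forall m ab, { ab' | good m ab ab' }).
  { intros m ab. apply constructive_indefinite_description.
    destruct (classic (0 <= fst ab < snd ab /\ snd ab <= 1)) as [[H1 H2]|Hn].
    - destruct (Hshrink m _ _ H1 H2) as [a' [b' Hab']]. exists (a', b'); intros _ _; exact Hab'.
    - exists ab; intros H1 H2; tauto. }
  pose (ab := fix ab m := match m with O => (0, 1) | S m => proj1_sig (Hstep m (ab m)) end).
  assert (Hgood : forall m, good m (ab m) (ab (S m))) by (intros m; exact (proj2_sig (Hstep m (ab m)))).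
  assert (Hab : forall m, 0 <= fst (ab m) < snd (ab m) /\ snd (ab m) <= 1).
  { induction m as [|m IH]; [simpl; lra|]. destruct IH as [H1 H2].
    destruct (Hgood m H1 H2) as [H3 [H4 _]]. lra. }
  assert (Hmono : forall k m, (k <= m)%nat -> fst (ab k) <= fst (ab m) /\ snd (ab m) <= snd (ab k)).
  { induction 1 as [|m _ IH]; [lra|]. destruct (Hab m) as [H1 H2].
    destruct (Hgood m H1 H2) as [H3 [H4 _]]. lra. }
  destruct (completeness (fun x => exists m, x = fst (ab m))) as [s [Hub Hlub]].
  - exists 1. intros x [m ->]. pose proof (Hab m); lra.
  - exists 0, O. reflexivity.
  - assert (Hin : forall m, fst (ab m) <= s <= snd (ab m)).
    { intros m. split; [apply Hub; exists m; reflexivity|].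
      apply Hlub. intros x [k ->]. pose proof (Hab k); pose proof (Hab m).
      destruct (Nat.le_ge_cases k m) as [Hkm|Hmk];
        [pose proof (Hmono _ _ Hkm) | pose proof (Hmono _ _ Hmk)]; lra. }
    exists s. intros m. destruct (Hab m) as [H1 H2].
    apply (Hgood m H1 H2). apply Hin.
Qed.

Definition decode4 (m : nat) : nat * nat * nat * nat :=
  let (i, m) := Cantor.of_nat m in let (n, m) := Cantor.of_nat m in
  let (j, k) := Cantor.of_nat m in (i, n, j, k).

Lemma decode4_onto i n j k : exists m, decode4 m = (i, n, j, k).
Proof.
  exists (Cantor.to_nat (i, Cantor.to_nat (n, Cantor.to_nat (j, k)))).
  unfold decode4. rewrite !Cantor.cancel_of_to. reflexivity.
Qed.

Section Metric.
Variables (X : Type) (d : X -> X -> R).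
Hypothesis Hm : is_metric d.

Lemma metric_ge0 x y : 0 <= d x y.
Proof. apply Hm. Qed.

Lemma metric_sym x y : d x y = d y x.
Proof. apply Hm. Qed.

Lemma metric_triangle x y z : d x z <= d x y + d y z.
Proof. apply Hm. Qed.

Lemma metric_xx x : d x x = 0.
Proof. apply Hm; reflexivity. Qed.

Lemma metric_gt0 x y : x <> y -> 0 < d x y.
Proof.
  intros Hxy. destruct (metric_ge0 x y) as [H|H]; [exact H|].
  exfalso; apply Hxy, Hm; auto.
Qed.

Lemma metric_lipschitz x a b : Rabs (d x a - d x b) <= d a b.
Proof.
  pose proof (metric_triangle x a b); pose proof (metric_triangle x b a).
  rewrite (metric_sym b a) in *. unfold Rabs; destruct Rcase_abs; lra.
Qed.

Lemma ball_open c e : is_open d (fun y => d c y < e).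
Proof.
  intros y Hy. exists (e - d c y); split; [lra|].
  intros z Hz. pose proof (metric_triangle c y z); lra.
Qed.

(* The minimum of [t |-> d x (h t)] over the compact [0,1] is attained. *)
Lemma path_dist_pos (h : R -> X) x : cont_on d h 0 1 ->
  (forall t, 0 <= t <= 1 -> h t <> x) ->
  exists a, 0 < a /\ forall t, 0 <= t <= 1 -> a <= d x (h t).
Proof.
  intros hc hx.
  set (f t := d x (h (clamp01 t))).
  destruct (continuity_ab_min f 0 1) as [tm [Hmin Htm]]; [lra| |].
  - intros c Hc eps Heps. destruct (hc c eps Hc Heps) as [del [Hdel Hh]].
    exists del; split; [exact Hdel|]. intros y [_ Hy]. unfold f, R_dist in *; simpl in *.
    rewrite (clamp01_id Hc). eapply Rle_lt_trans; [apply metric_lipschitz|].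
    rewrite metric_sym. apply Hh; [apply clamp01_range|].
    eapply Rle_lt_trans; [apply clamp01_dist|]; auto.
  - exists (f tm); split.
    + apply metric_gt0. intros E. apply (hx (clamp01 tm)); [apply clamp01_range | auto].
    + intros t Ht. specialize (Hmin t Ht). unfold f in Hmin. rewrite (clamp01_id Ht) in Hmin.
      exact Hmin.
Qed.

End Metric.

Record graph_param {X : Type} (d : X -> X -> R) (r : nat) (E : nat -> X -> Prop)
    (h : nat -> R -> X) (g : nat -> X -> R) : Prop := {
  edge_count_pos : (1 <= r)%nat;
  edge_h_in : forall i t, (i < r)%nat -> 0 <= t <= 1 -> E i (h i t);
  edge_g_range : forall i x, (i < r)%nat -> E i x -> 0 <= g i x <= 1;
  edge_g_h : forall i t, (i < r)%nat -> 0 <= t <= 1 -> g i (h i t) = t;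
  edge_h_g : forall i x, (i < r)%nat -> E i x -> h i (g i x) = x;
  edge_h_cont : forall i, (i < r)%nat -> cont_on d (h i) 0 1;
  edge_g_cont : forall i x eps, (i < r)%nat -> E i x -> 0 < eps -> exists delta, 0 < delta /\
    forall y, E i y -> d x y < delta -> Rabs (g i y - g i x) < eps;
  edges_cover : forall x, exists i, (i < r)%nat /\ E i x;
  edges_meet : forall i j x, (i < r)%nat -> (j < r)%nat -> i <> j -> E i x -> E j x ->
    (x = h i 0 \/ x = h i 1) /\ (x = h j 0 \/ x = h j 1)
}.

Definition arc_param {X : Type} (d : X -> X -> R) (A : X -> Prop) (a b : X)
    (h : R -> X) (g : X -> R) : Prop :=
  (forall t, 0 <= t <= 1 -> A (h t)) /\ (forall x, A x -> 0 <= g x <= 1) /\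
  (forall t, 0 <= t <= 1 -> g (h t) = t) /\ (forall x, A x -> h (g x) = x) /\
  cont_on d h 0 1 /\
  (forall x eps, A x -> 0 < eps -> exists delta, 0 < delta /\
     forall y, A y -> d x y < delta -> Rabs (g y - g x) < eps) /\
  h 0 = a /\ h 1 = b.

Lemma finite_graph_param {X : Type} (d : X -> X -> R) : is_finite_graph d ->
  exists r E h g, graph_param d r E h g.
Proof.
  intros (r & E & a & b & Hr & Harc & Hcov & Hmeet).
  assert (Hchoice : forall i, exists hg : (R -> X) * (X -> R),
    (i < r)%nat -> arc_param d (E i) (a i) (b i) (fst hg) (snd hg)).
  { intros i. destruct (Nat.lt_ge_cases i r) as [Hi|Hi].
    - destruct (Harc i Hi) as (h & g & Hh). exists (h, g). intros _. exact Hh.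
    - exists (fun _ => a O, fun _ => 0). intros; lia. }
  destruct (choice _ Hchoice) as [hg HP].
  exists r, E, (fun i => fst (hg i)), (fun i => snd (hg i)).
  constructor; try assumption.
  - intros i t Hi. apply (HP i Hi).
  - intros i x Hi. apply (HP i Hi).
  - intros i t Hi. apply (HP i Hi).
  - intros i x Hi. apply (HP i Hi).
  - intros i Hi. apply (HP i Hi).
  - intros i x eps Hi. apply (HP i Hi).
  - intros i j x Hi Hj Hij Hxi Hxj.
    destruct (HP i Hi) as (_ & _ & _ & _ & _ & _ & -> & ->).
    destruct (HP j Hj) as (_ & _ & _ & _ & _ & _ & -> & ->).
    auto.
Qed.

Section Graph.
Variables (X : Type) (d : X -> X -> R).
Hypothesis Hm : is_metric d.
Hypothesis Hconn : is_connected d.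
Variables (r : nat) (E : nat -> X -> Prop) (h : nat -> R -> X) (g : nat -> X -> R).
Hypothesis Hg : graph_param d r E h g.

Lemma edge_dist_pos j x : (j < r)%nat -> ~ E j x ->
  exists a, 0 < a /\ forall y, E j y -> a <= d x y.
Proof.
  intros Hj Hx.
  destruct (path_dist_pos Hm (x := x) (edge_h_cont Hg Hj)) as [a [Ha Hax]].
  { intros t Ht Hxt. apply Hx. rewrite <- Hxt. apply (edge_h_in Hg); assumption. }
  exists a; split; [exact Ha|]. intros y Hy.
  rewrite <- (edge_h_g Hg Hj Hy). apply Hax, (edge_g_range Hg Hj Hy).
Qed.

(* A point of a [P]-edge lies off every other edge, hence at positive distance from them all. *)
Lemma edge_union_open (P : nat -> Prop) :
  (forall i j x, (i < r)%nat -> (j < r)%nat -> P i -> ~ P j -> E i x -> E j x -> False) ->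
  is_open d (fun x => exists i, (i < r)%nat /\ P i /\ E i x).
Proof.
  intros Hsep x (k & Hk & HPk & Hxk).
  destruct (@exists_pos_below_all (fun j a => ~ P j -> forall y, E j y -> a <= d x y) r)
    as [a [Ha Hfar]].
  - intros j a b Hfar Hb Hba HPj y Hy. specialize (Hfar HPj y Hy). lra.
  - intros j Hj. destruct (classic (P j)) as [HPj|HPj].
    + exists 1; split; [lra | contradiction].
    + destruct (edge_dist_pos Hj (fun Hxj => Hsep k j x Hk Hj HPk HPj Hxk Hxj)) as [a [Ha Hfar]].
      exists a; auto.
  - exists a; split; [exact Ha|]. intros y Hy.
    destruct (edges_cover Hg y) as [i [Hi Hyi]]. exists i; split; [exact Hi|split; [|exact Hyi]].
    apply NNPP; intros HPi. specialize (Hfar i Hi HPi y Hyi). lra.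
Qed.

Definition orient (o : bool) (s : R) := if o then s else 1 - s.

Lemma orient_range o s : 0 <= s <= 1 -> 0 <= orient o s <= 1.
Proof. destruct o; simpl; lra. Qed.

Lemma orient_involutive o s : orient o (orient o s) = s.
Proof. destruct o; simpl; lra. Qed.

Definition oedge (p : nat * bool) (u : R) : X := h (fst p) (orient (snd p) u).

Definition flip (p : nat * bool) : nat * bool := (fst p, negb (snd p)).

Lemma oedge_flip p u : oedge (flip p) u = oedge p (1 - u).
Proof. unfold oedge, flip, orient; destruct (snd p); simpl; f_equal; lra. Qed.

Lemma oedge_start (i : nat) (x : X) : x = h i 0 \/ x = h i 1 -> exists o, oedge (i, o) 0 = x.
Proof.
  intros [->| ->]; [exists true | exists false]; unfold oedge, orient; simpl; f_equal; lra.
Qed.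

Lemma oedge_cont p : (fst p < r)%nat -> cont_on d (oedge p) 0 1.
Proof.
  intros Hp t eps Ht He.
  destruct (edge_h_cont Hg Hp (orient_range (snd p) Ht) He) as [del [Hdel Hh]].
  exists del; split; [exact Hdel|]. intros s Hs Hst. apply Hh; [apply orient_range; exact Hs|].
  destruct (snd p); simpl; [exact Hst|].
  replace (1 - s - (1 - t)) with (- (s - t)) by ring. rewrite Rabs_Ropp; exact Hst.
Qed.

Record closed_walk (w : nat -> nat * bool) (M : nat) : Prop := {
  walk_length : (2 <= M)%nat;
  walk_edges : forall k, (k < M)%nat -> (fst (w k) < r)%nat;
  walk_chain : forall k, (S k < M)%nat -> oedge (w k) 1 = oedge (w (S k)) 0;
  walk_closed : oedge (w (M - 1)%nat) 1 = oedge (w O) 0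
}.

Definition walk_covers (w : nat -> nat * bool) (M i : nat) : Prop :=
  exists k, (k < M)%nat /\ fst (w k) = i.

Lemma uncovered_edge_meets_covered w M j0 :
  closed_walk w M -> (j0 < r)%nat -> ~ walk_covers w M j0 ->
  exists j k x, (j < r)%nat /\ (k < r)%nat /\ ~ walk_covers w M j /\ walk_covers w M k /\
    E j x /\ E k x.
Proof.
  intros Hw Hj0 Hnc. apply NNPP. intros Hno.
  set (U := fun x => exists k, (k < r)%nat /\ walk_covers w M k /\ E k x).
  set (V := fun x => exists j, (j < r)%nat /\ ~ walk_covers w M j /\ E j x).
  assert (HUV : forall x, ~ (U x /\ V x)).
  { intros x [(k & Hk & Hck & Hxk) (j & Hj & Hcj & Hxj)]. apply Hno. exists j, k, x. tauto. }
  assert (HU0 : U (oedge (w O) 0)).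
  { assert (H0 : (fst (w O) < r)%nat) by (apply (walk_edges Hw); pose proof (walk_length Hw); lia).
    exists (fst (w O)); split; [exact H0|split].
    - exists O; split; [pose proof (walk_length Hw); lia | reflexivity].
    - apply (edge_h_in Hg H0), orient_range; lra. }
  assert (HV0 : V (h j0 0)) by (exists j0; repeat split; auto; apply (edge_h_in Hg Hj0); lra).
  destruct (Hconn (U := U) (V := V)) as [HU|HV].
  - apply edge_union_open. intros i j x Hi Hj Hci Hcj Hxi Hxj. apply Hno. exists j, i, x. tauto.
  - apply edge_union_open. intros i j x Hi Hj Hci Hcj Hxi Hxj. apply NNPP in Hcj.
    apply Hno. exists i, j, x. tauto.
  - intros x. destruct (edges_cover Hg x) as [i [Hi Hxi]].
    destruct (classic (walk_covers w M i)); [left | right]; exists i; auto.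
  - exact HUV.
  - exact (HUV _ (conj (HU _) HV0)).
  - exact (HUV _ (conj HU0 (HV _))).
Qed.

Lemma endpoint_is_walk_node w M p x : closed_walk w M -> (p < M)%nat ->
  x = h (fst (w p)) 0 \/ x = h (fst (w p)) 1 -> exists q, (q < M)%nat /\ oedge (w q) 0 = x.
Proof.
  intros Hw Hp Hx.
  assert (Hx' : x = oedge (w p) 0 \/ x = oedge (w p) 1).
  { unfold oedge, orient. destruct (snd (w p)); [tauto|].
    rewrite Rminus_0_r, Rminus_diag. tauto. }
  destruct Hx' as [->| ->]; [exists p; auto|].
  destruct (Nat.lt_ge_cases (S p) M) as [HSp|HSp].
  - exists (S p); split; [exact HSp|]. symmetry; apply (walk_chain Hw HSp).
  - exists O; split; [pose proof (walk_length Hw); lia|].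
    replace p with (M - 1)%nat by lia. symmetry; apply (walk_closed Hw).
Qed.

Definition insert_detour (w : nat -> nat * bool) (q : nat) (p : nat * bool) (k : nat) :=
  if (k <? q)%nat then w k else if (k =? q)%nat then p
  else if (k =? S q)%nat then flip p else w (k - 2)%nat.

Lemma insert_detour_lt w q p k : (k < q)%nat -> insert_detour w q p k = w k.
Proof. intros. unfold insert_detour. destruct (Nat.ltb_spec k q); [reflexivity | lia]. Qed.

Lemma insert_detour_at w q p : insert_detour w q p q = p.
Proof. unfold insert_detour. rewrite Nat.ltb_irrefl, Nat.eqb_refl. reflexivity. Qed.

Lemma insert_detour_next w q p : insert_detour w q p (S q) = flip p.
Proof.
  unfold insert_detour. destruct (Nat.ltb_spec (S q) q); [lia|].
  destruct (Nat.eqb_spec (S q) q); [lia|]. rewrite Nat.eqb_refl. reflexivity.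
Qed.

Lemma insert_detour_gt w q p k : (S q < k)%nat -> insert_detour w q p k = w (k - 2)%nat.
Proof.
  intros. unfold insert_detour. destruct (Nat.ltb_spec k q); [lia|].
  destruct (Nat.eqb_spec k q); [lia|]. destruct (Nat.eqb_spec k (S q)); [lia | reflexivity].
Qed.

Lemma insert_detour_chain w M q p k : closed_walk w M -> (q < M)%nat ->
  oedge p 0 = oedge (w q) 0 -> (S k < M + 2)%nat ->
  oedge (insert_detour w q p k) 1 = oedge (insert_detour w q p (S k)) 0.
Proof.
  intros Hw Hq Hpq Hk.
  destruct (Nat.lt_ge_cases (S k) q) as [HSk|HSk].
  { rewrite !insert_detour_lt by lia. apply (walk_chain Hw); lia. }
  destruct (Nat.eq_dec (S k) q) as [<-|HSk'].
  { rewrite insert_detour_lt, insert_detour_at, Hpq by lia. apply (walk_chain Hw); lia. }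
  destruct (Nat.eq_dec k q) as [->|Hkq].
  { rewrite insert_detour_at, insert_detour_next, oedge_flip. f_equal; ring. }
  destruct (Nat.eq_dec k (S q)) as [->|HkSq].
  { rewrite insert_detour_next, insert_detour_gt, oedge_flip, Nat.sub_succ, Nat.sub_succ,
      Nat.sub_0_r, <- Hpq by lia. f_equal; ring. }
  rewrite !insert_detour_gt by lia. replace (S k - 2)%nat with (S (k - 2)) by lia.
  apply (walk_chain Hw); lia.
Qed.

Lemma insert_detour_closed w M q p : closed_walk w M -> (q < M)%nat -> (fst p < r)%nat ->
  oedge p 0 = oedge (w q) 0 -> closed_walk (insert_detour w q p) (M + 2).
Proof.
  intros Hw Hq Hp Hpq. pose proof (walk_length Hw). constructor.
  - lia.
  - intros k Hk. destruct (Nat.lt_ge_cases k q); [rewrite insert_detour_lt by lia|].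
    { apply (walk_edges Hw); lia. }
    destruct (Nat.eq_dec k q) as [->|]; [rewrite insert_detour_at; exact Hp|].
    destruct (Nat.eq_dec k (S q)) as [->|]; [rewrite insert_detour_next; exact Hp|].
    rewrite insert_detour_gt by lia. apply (walk_edges Hw); lia.
  - intros k Hk. apply (insert_detour_chain Hw Hq Hpq Hk).
  - rewrite insert_detour_gt by lia. replace (M + 2 - 1 - 2)%nat with (M - 1)%nat by lia.
    rewrite (walk_closed Hw). destruct (Nat.eq_dec q O) as [->|Hq0].
    + rewrite insert_detour_at; symmetry; exact Hpq.
    + rewrite insert_detour_lt by lia. reflexivity.
Qed.

Lemma insert_detour_covers w M q p i : walk_covers w M i ->
  walk_covers (insert_detour w q p) (M + 2) i.
Proof.
  intros [k [Hk Hi]]. destruct (Nat.lt_ge_cases k q).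
  - exists k; split; [lia|]. rewrite insert_detour_lt; assumption.
  - exists (k + 2)%nat; split; [lia|]. rewrite insert_detour_gt by lia.
    replace (k + 2 - 2)%nat with k by lia. exact Hi.
Qed.

Lemma insert_detour_covers_new w M q p : (q < M)%nat ->
  walk_covers (insert_detour w q p) (M + 2) (fst p).
Proof. intros Hq. exists q; split; [lia|]. rewrite insert_detour_at. reflexivity. Qed.

(* Connectedness puts an uncovered edge [j] at a vertex [x] of the walk; detour along [j] there. *)
Lemma closed_walk_extend w M : closed_walk w M -> ~ (forall i, (i < r)%nat -> walk_covers w M i) ->
  exists w' M', closed_walk w' M' /\ (forall i, walk_covers w M i -> walk_covers w' M' i) /\
    exists j, (j < r)%nat /\ ~ walk_covers w M j /\ walk_covers w' M' j.
Proof.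
  intros Hw Hn. apply not_all_ex_not in Hn. destruct Hn as [j0 Hj0].
  apply imply_to_and in Hj0. destruct Hj0 as [Hj0 Hnc].
  destruct (uncovered_edge_meets_covered Hw Hj0 Hnc)
    as (j & k & x & Hj & Hk & Hcj & [p [Hp <-]] & Hxj & Hxp).
  assert (Hjp : j <> fst (w p)) by (intros ->; apply Hcj; exists p; auto).
  destruct (edges_meet Hg Hj Hk Hjp Hxj Hxp) as [Hxj' Hxp'].
  destruct (endpoint_is_walk_node Hw Hp Hxp') as [q [Hq Hxq]].
  destruct (oedge_start Hxj') as [o Hxo].
  exists (insert_detour w q (j, o)), (M + 2)%nat. split; [|split].
  - apply insert_detour_closed; auto. rewrite Hxo, Hxq. reflexivity.
  - intros i. apply insert_detour_covers.
  - exists j. split; [exact Hj|split; [exact Hcj|]]. exact (insert_detour_covers_new w (j, o) Hq).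
Qed.

Lemma closed_walk_covering_many n : exists w M, closed_walk w M /\
  ((forall i, (i < r)%nat -> walk_covers w M i) \/
   exists L, NoDup L /\ length L = n /\ forall i, In i L -> (i < r)%nat /\ walk_covers w M i).
Proof.
  induction n as [|n IH].
  - pose proof (edge_count_pos Hg).
    exists (fun k => if (k =? 0)%nat then (O, true) else (O, false)), 2%nat. split.
    + constructor; [lia | | |].
      * intros k _. destruct (k =? 0)%nat; simpl; lia.
      * intros k Hk. replace k with O by lia. unfold oedge, orient; simpl. f_equal; lra.
      * unfold oedge, orient; simpl. f_equal; lra.
    + right. exists nil. split; [constructor | split; [reflexivity | intros i []]].
  - destruct IH as (w & M & Hw & [Hall | (L & HL & Hlen & HLc)]); [exists w, M; auto|].
    destruct (classic (forall i, (i < r)%nat -> walk_covers w M i)) as [Hall|Hn];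
      [exists w, M; auto|].
    destruct (closed_walk_extend Hw Hn) as (w' & M' & Hw' & Hmono & j & Hj & Hnj & Hcj).
    exists w', M'. split; [exact Hw'|]. right. exists (j :: L). split; [|split].
    + constructor; [|exact HL]. intros Hin. apply Hnj, HLc, Hin.
    + simpl; lia.
    + intros i [<-|Hi]; [auto|]. destruct (HLc i Hi); auto.
Qed.

Lemma closed_walk_covering : exists w M, closed_walk w M /\ forall i, (i < r)%nat -> walk_covers w M i.
Proof.
  destruct (closed_walk_covering_many (S r)) as (w & M & Hw & [Hall | (L & HL & Hlen & HLc)]);
    [exists w, M; auto|].
  exfalso. assert (Hle : (length L <= length (seq 0 r))%nat).
  { apply NoDup_incl_length; [exact HL|]. intros i Hi. apply in_seq. destruct (HLc i Hi); lia. }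
  rewrite length_seq in Hle. lia.
Qed.

Section WalkMap.
Variables (w : nat -> nat * bool) (M : nat).
Hypothesis Hw : closed_walk w M.
Hypothesis Hcov : forall i, (i < r)%nat -> walk_covers w M i.

Lemma INR_M_pos : 0 < INR M.
Proof. apply lt_0_INR. pose proof (walk_length Hw); lia. Qed.

(* [walk_from n k] follows the oriented edges [w k, ..., w (k + n)] on [[0, n + 1]], one per unit. *)
Fixpoint walk_from (n k : nat) (t : R) : X :=
  match n with
  | O => oedge (w k) t
  | S n => if Rle_dec t 1 then oedge (w k) t else walk_from n (S k) (t - 1)
  end.

Lemma walk_from_piece n : forall k p u, (p <= n)%nat -> (k + n < M)%nat -> 0 <= u <= 1 ->
  walk_from n k (INR p + u) = oedge (w (k + p)%nat) u.
Proof.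
  induction n as [|n IH]; intros k p u Hp Hk Hu.
  - replace p with O by lia. simpl. rewrite Nat.add_0_r. f_equal; lra.
  - simpl. destruct p as [|p].
    + simpl. rewrite Nat.add_0_r. destruct Rle_dec; [f_equal; lra | lra].
    + rewrite S_INR. pose proof (pos_INR p). destruct Rle_dec as [Hle|Hle].
      * assert (p = O /\ u = 0) as [-> ->].
        { destruct p; [simpl in Hle; split; [reflexivity | lra]|].
          rewrite S_INR in Hle. pose proof (pos_INR p). lra. }
        simpl. replace (0 + 1 + 0) with 1 by ring. replace (k + 1)%nat with (S k) by lia.
        apply (walk_chain Hw). lia.
      * replace (INR p + 1 + u - 1) with (INR p + u) by ring.
        rewrite IH; [do 2 f_equal; lia | lia | lia | exact Hu].
Qed.

Lemma walk_from_cont n : forall k, (k + n < M)%nat -> cont_on d (walk_from n k) 0 (INR n + 1).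
Proof.
  induction n as [|n IH]; intros k Hk.
  - simpl. rewrite Rplus_0_l. apply oedge_cont, (walk_edges Hw). lia.
  - assert (Hn : 0 <= INR n) by apply pos_INR.
    apply cont_on_paste with 1; [rewrite S_INR; lra | |].
    + apply cont_on_ext with (oedge (w k)).
      * intros t Ht. simpl. destruct Rle_dec; [reflexivity | lra].
      * apply oedge_cont, (walk_edges Hw). lia.
    + apply cont_on_ext with (fun t => walk_from n (S k) (t - 1)).
      * intros t Ht. simpl. destruct Rle_dec as [Ht1|]; [|reflexivity].
        replace t with 1 by lra. replace (1 - 1) with (INR 0 + 0) by (simpl; ring).
        rewrite walk_from_piece, Nat.add_0_r; [|lia|lia|lra]. symmetry; apply (walk_chain Hw). lia.
      * replace 1 with (0 + 1) at 1 by ring. rewrite S_INR.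
        apply cont_on_shift, IH. lia.
Qed.

Definition walk_path (t : R) : X := walk_from (M - 1) O (INR M * t).

Lemma walk_path_piece p u : (p < M)%nat -> 0 <= u <= 1 ->
  walk_path ((INR p + u) / INR M) = oedge (w p) u.
Proof.
  intros Hp Hu. unfold walk_path. pose proof INR_M_pos.
  replace (INR M * ((INR p + u) / INR M)) with (INR p + u) by (field; lra).
  apply walk_from_piece; lia || assumption.
Qed.

Lemma walk_path_cont : cont_on d walk_path 0 1.
Proof.
  apply cont_on_scale; [exact INR_M_pos|]. rewrite Rmult_0_r, Rmult_1_r.
  replace (INR M) with (INR (M - 1) + 1).
  - apply walk_from_cont. pose proof (walk_length Hw); lia.
  - rewrite minus_INR by (pose proof (walk_length Hw); lia). simpl; ring.
Qed.

Lemma walk_path_0 : walk_path 0 = oedge (w O) 0.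
Proof.
  rewrite <- walk_path_piece by (pose proof (walk_length Hw); lia || lra).
  f_equal. simpl. pose proof INR_M_pos. field. lra.
Qed.

Lemma walk_path_1 : walk_path 1 = oedge (w O) 0.
Proof.
  pose proof (walk_length Hw). rewrite <- (walk_closed Hw), <- walk_path_piece by (lia || lra).
  f_equal. rewrite minus_INR by lia. pose proof INR_M_pos. simpl. field. lra.
Qed.

Lemma piece_param_range p u : (p < M)%nat -> 0 <= u <= 1 -> 0 <= (INR p + u) / INR M <= 1.
Proof.
  intros Hp Hu. pose proof INR_M_pos. pose proof (pos_INR p).
  assert (INR p + 1 <= INR M) by (rewrite <- S_INR; apply le_INR; lia).
  apply div_range01; lra.
Qed.

Lemma walk_path_onto_edge i t : (i < r)%nat -> 0 <= t <= 1 ->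
  exists tau, 0 <= tau <= 1 /\ walk_path tau = h i t.
Proof.
  intros Hi Ht. destruct (Hcov Hi) as [p [Hp <-]].
  exists ((INR p + orient (snd (w p)) t) / INR M).
  split; [apply piece_param_range; [exact Hp | apply orient_range; exact Ht]|].
  rewrite walk_path_piece by (exact Hp || apply orient_range; exact Ht).
  unfold oedge. rewrite orient_involutive. reflexivity.
Qed.

Lemma walk_path_onto y : exists tau, 0 <= tau <= 1 /\ walk_path tau = y.
Proof.
  destruct (edges_cover Hg y) as [i [Hi Hy]]. rewrite <- (edge_h_g Hg Hi Hy).
  apply walk_path_onto_edge; [exact Hi | apply (edge_g_range Hg Hi Hy)].
Qed.

Definition edge_of (x : X) : nat :=
  proj1_sig (constructive_indefinite_description _ (edges_cover Hg x)).

Lemma edge_of_spec x : (edge_of x < r)%nat /\ E (edge_of x) x.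
Proof. exact (proj2_sig (constructive_indefinite_description _ (edges_cover Hg x))). Qed.

Definition graph_map (x : X) : X := walk_path (g (edge_of x) x).

(* Independent of the chosen edge: a point on two edges is an end point of both,
   and the closed walk path takes the same value at [0] and [1]. *)
Lemma graph_map_edge i t : (i < r)%nat -> 0 <= t <= 1 -> graph_map (h i t) = walk_path t.
Proof.
  intros Hi Ht. unfold graph_map. destruct (edge_of_spec (h i t)) as [Hj Hxj].
  set (j := edge_of (h i t)) in *.
  destruct (Nat.eq_dec j i) as [->|Hji]; [rewrite (edge_g_h Hg Hi Ht); reflexivity|].
  destruct (edges_meet Hg Hj Hi Hji Hxj (edge_h_in Hg Hi Ht)) as [Hxj' Hxi'].
  assert (Ht01 : t = 0 \/ t = 1).
  { rewrite <- (edge_g_h Hg Hi Ht).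
    destruct Hxi' as [-> | ->]; [left | right]; apply (edge_g_h Hg Hi); lra. }
  assert (Hgj01 : g j (h i t) = 0 \/ g j (h i t) = 1).
  { destruct Hxj' as [-> | ->]; [left | right]; apply (edge_g_h Hg Hj); lra. }
  destruct Ht01 as [-> | ->]; destruct Hgj01 as [-> | ->];
    rewrite ?walk_path_0, ?walk_path_1; reflexivity.
Qed.

Lemma graph_map_on_edge i x : (i < r)%nat -> E i x -> graph_map x = walk_path (g i x).
Proof.
  intros Hi Hx. rewrite <- (edge_h_g Hg Hi Hx) at 1.
  apply graph_map_edge; [exact Hi | apply (edge_g_range Hg Hi Hx)].
Qed.

Lemma graph_map_cont : continuous d graph_map.
Proof.
  intros x eps He.
  destruct (@exists_pos_below_all
    (fun j a => forall y, E j y -> d x y < a -> d (graph_map x) (graph_map y) < eps) r)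
    as [a [Ha Hclose]].
  - intros j a b Hab Hb Hba y Hy Hxy. apply Hab; [exact Hy | lra].
  - intros j Hj. destruct (classic (E j x)) as [Hx|Hx].
    + destruct (walk_path_cont (edge_g_range Hg Hj Hx) He) as [d1 [Hd1 Hpath]].
      destruct (edge_g_cont Hg Hj Hx Hd1) as [d2 [Hd2 Hgc]].
      exists d2; split; [exact Hd2|]. intros y Hy Hxy.
      rewrite (graph_map_on_edge Hj Hx), (graph_map_on_edge Hj Hy).
      apply Hpath; [apply (edge_g_range Hg Hj Hy) | apply Hgc; assumption].
    + destruct (edge_dist_pos Hj Hx) as [a [Ha Hfar]].
      exists a; split; [exact Ha|]. intros y Hy Hxy. specialize (Hfar y Hy). lra.
  - exists a; split; [exact Ha|]. intros y Hxy.
    destruct (edges_cover Hg y) as [j [Hj Hy]]. exact (Hclose j Hj y Hy Hxy).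
Qed.

Definition madic (n j : nat) (s : R) : R := (INR j + s) / INR M ^ n.

Lemma INR_M_pow_pos n : 0 < INR M ^ n.
Proof. apply pow_lt, INR_M_pos. Qed.

Lemma M_pow_pos n : (0 < M ^ n)%nat.
Proof. pose proof (walk_length Hw). pose proof (Nat.pow_nonzero M n). lia. Qed.

Lemma madic_range n j s : (j < M ^ n)%nat -> 0 <= s <= 1 -> 0 <= madic n j s <= 1.
Proof.
  intros Hj Hs. pose proof (INR_M_pow_pos n). pose proof (pos_INR j).
  assert (INR j + 1 <= INR M ^ n) by (rewrite <- pow_INR, <- S_INR; apply le_INR; lia).
  apply div_range01; lra.
Qed.

Lemma madic_succ n j s : madic (S n) j s =
  (INR (j / M ^ n) + madic n (j mod M ^ n) s) / INR M.
Proof.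
  pose proof (M_pow_pos n). pose proof (INR_M_pow_pos n). pose proof INR_M_pos.
  unfold madic. rewrite (Nat.div_mod_eq j (M ^ n)) at 1.
  rewrite plus_INR, mult_INR, pow_INR. simpl. field. lra.
Qed.

Lemma madic_reflect n j s : (j < M ^ n)%nat ->
  1 - madic n j s = madic n (M ^ n - 1 - j) (1 - s).
Proof.
  intros Hj. pose proof (INR_M_pow_pos n). unfold madic.
  rewrite !minus_INR, pow_INR by lia. simpl. field. lra.
Qed.

Lemma iter_graph_map_madic n : forall i j, (i < r)%nat -> (j < M ^ n)%nat ->
  exists p, (fst p < r)%nat /\
    forall s, 0 <= s <= 1 -> iter n graph_map (h i (madic n j s)) = oedge p s.
Proof.
  induction n as [|n IH]; intros i j Hi Hj.
  - exists (i, true). split; [exact Hi|]. intros s Hs.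
    simpl in Hj. replace j with O by lia. unfold madic, oedge, orient. simpl. f_equal. field.
  - pose proof (M_pow_pos n).
    set (k := (j / M ^ n)%nat). set (j' := (j mod M ^ n)%nat).
    assert (Hk : (k < M)%nat) by (apply Nat.Div0.div_lt_upper_bound; rewrite Nat.mul_comm, <- Nat.pow_succ_r'; exact Hj).
    assert (Hj' : (j' < M ^ n)%nat) by (apply Nat.mod_upper_bound; lia).
    assert (Hfirst : forall s, 0 <= s <= 1 ->
      graph_map (h i (madic (S n) j s)) = oedge (w k) (madic n j' s)).
    { intros s Hs. rewrite graph_map_edge by (exact Hi || apply madic_range; assumption).
      rewrite madic_succ. apply walk_path_piece; [exact Hk | apply madic_range; assumption]. }
    assert (Hwk : (fst (w k) < r)%nat) by (apply (walk_edges Hw); exact Hk).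
    destruct (snd (w k)) eqn:Hok.
    + destruct (IH _ _ Hwk Hj') as [p [Hp Hiter]].
      exists p. split; [exact Hp|]. intros s Hs.
      rewrite iter_Sr, Hfirst by exact Hs. unfold oedge at 1. rewrite Hok. apply Hiter, Hs.
    + destruct (IH (fst (w k)) (M ^ n - 1 - j')%nat Hwk ltac:(lia)) as [p [Hp Hiter]].
      exists (flip p). split; [exact Hp|]. intros s Hs.
      rewrite iter_Sr, Hfirst by exact Hs. unfold oedge at 1. rewrite Hok. simpl orient.
      rewrite madic_reflect, Hiter by (lia || lra). rewrite oedge_flip. f_equal; ring.
Qed.

Lemma iter_graph_map_madic_onto n i j y : (i < r)%nat -> (j < M ^ n)%nat ->
  exists s, 0 <= s <= 1 /\ iter (S n) graph_map (h i (madic n j s)) = y.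
Proof.
  intros Hi Hj. destruct (iter_graph_map_madic Hi Hj) as [p [Hp Hiter]].
  destruct (walk_path_onto y) as [tau [Htau <-]].
  exists (orient (snd p) tau). split; [apply orient_range; exact Htau|].
  simpl. rewrite Hiter by (apply orient_range; exact Htau).
  unfold oedge. rewrite orient_involutive. apply graph_map_edge; assumption.
Qed.

Lemma INR_le_M_pow n : INR n + 1 <= INR M ^ n.
Proof.
  induction n as [|n IH]; [simpl; lra|].
  assert (HM : 2 <= INR M) by (replace 2 with (INR 2) by (simpl; ring); apply le_INR, (walk_length Hw)).
  rewrite S_INR. simpl. pose proof (pos_INR n). nra.
Qed.

Lemma madic_near c del : 0 <= c <= 1 -> 0 < del ->
  exists n j, (j < M ^ n)%nat /\ forall s, 0 <= s <= 1 -> Rabs (madic n j s - c) < del.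
Proof.
  intros Hc Hdel. destruct (archimed_cor1 del Hdel) as [n [Hn Hn0]].
  pose proof (INR_le_M_pow n) as Hle. pose proof (INR_M_pow_pos n) as Hpos.
  pose proof (M_pow_pos n).
  assert (HnR : 0 < INR n) by (apply lt_0_INR; exact Hn0).
  destruct (@nat_interval_cover (M ^ n - 1) (c * INR M ^ n)) as [j [Hj Hcj]].
  { replace (INR (S (M ^ n - 1))) with (INR M ^ n) by (rewrite <- pow_INR; f_equal; lia).
    split; nra. }
  exists n, j. split; [lia|]. intros s Hs. unfold madic.
  replace ((INR j + s) / INR M ^ n - c) with ((INR j + s - c * INR M ^ n) / INR M ^ n) by (field; lra).
  unfold Rdiv. rewrite Rabs_mult, (Rabs_right (/ _)) by (left; apply Rinv_0_lt_compat; lra).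
  assert (Rabs (INR j + s - c * INR M ^ n) <= 1) by (apply Rabs_le; lra).
  assert (/ INR M ^ n < / INR n) by (apply Rinv_lt_contravar; nra).
  pose proof (Rinv_0_lt_compat _ Hpos). pose proof (Rabs_pos (INR j + s - c * INR M ^ n)). nra.
Qed.

Lemma open_contains_madic_arc U u : is_open d U -> U u ->
  exists i n j, (i < r)%nat /\ (j < M ^ n)%nat /\ forall s, 0 <= s <= 1 -> U (h i (madic n j s)).
Proof.
  intros HU Hu. destruct (HU u Hu) as [eps [He Hball]].
  destruct (edges_cover Hg u) as [i [Hi Hui]].
  pose proof (edge_g_range Hg Hi Hui) as Hgu.
  destruct (edge_h_cont Hg Hi Hgu He) as [del [Hdel Hh]].
  destruct (madic_near Hgu Hdel) as [n [j [Hj Hnear]]].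
  exists i, n, j. split; [exact Hi|split; [exact Hj|]]. intros s Hs. apply Hball.
  rewrite <- (edge_h_g Hg Hi Hui) at 1. apply Hh; [apply madic_range | apply Hnear]; assumption.
Qed.

Lemma madic_arc_periodic_point n i j : (i < r)%nat -> (j < M ^ n)%nat ->
  exists s, 0 <= s <= 1 /\ iter (S n) graph_map (h i (madic n j s)) = h i (madic n j s).
Proof.
  intros Hi Hj. destruct (iter_graph_map_madic Hi Hj) as [p [Hp Hiter]].
  destruct (Hcov Hi) as [q [Hq Hwq]].
  (* Walk piece [q] runs over edge [i]; at a zero [u] of [phi], the point of the arc sent to
     [oedge (w q) u] is that point itself. *)
  set (phi u := madic n j (orient (snd p) ((INR q + u) / INR M)) - orient (snd (w q)) u).
  assert (Hphi : forall u, 0 <= u <= 1 -> 0 <= madic n j (orient (snd p) ((INR q + u) / INR M)) <= 1).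
  { intros u Hu. apply madic_range, orient_range, piece_param_range; assumption. }
  destruct (IVT_cor phi 0 1) as [u [Hu Hphi0]].
  - unfold phi, madic, orient. destruct (snd p), (snd (w q)); reg.
  - lra.
  - pose proof (Hphi 0 ltac:(lra)). pose proof (Hphi 1 ltac:(lra)).
    unfold phi, orient at 2 4. destruct (snd (w q)); nra.
  - set (s := orient (snd p) ((INR q + u) / INR M)).
    assert (Hs : 0 <= s <= 1) by (apply orient_range, piece_param_range; assumption).
    exists s. split; [exact Hs|].
    simpl. rewrite Hiter by exact Hs. unfold oedge at 1, s. rewrite orient_involutive.
    rewrite graph_map_edge, walk_path_piece by (assumption || apply piece_param_range; assumption).
    unfold oedge. rewrite Hwq. f_equal. fold s. unfold phi in Hphi0. fold s in Hphi0. lra.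
Qed.

Lemma graph_map_onto : onto graph_map.
Proof.
  intros y. pose proof (edge_count_pos Hg).
  destruct (@iter_graph_map_madic_onto 0 0 0 y ltac:(lia) ltac:(simpl; lia)) as [s [_ Hy]].
  exists (h 0%nat (madic 0 0 s)). exact Hy.
Qed.

Lemma graph_map_transitive : top_transitive d graph_map.
Proof.
  intros U V HU HV [u Hu] [v Hv].
  destruct (open_contains_madic_arc HU Hu) as (i & n & j & Hi & Hj & HUarc).
  destruct (iter_graph_map_madic_onto v Hi Hj) as [s [Hs Hv']].
  exists (S n). split; [lia|]. exists (h i (madic n j s)). split; [apply HUarc, Hs | rewrite Hv'; exact Hv].
Qed.

Lemma graph_map_dense_periodic : dense_periodic d graph_map.
Proof.
  intros U HU [u Hu]. destruct (open_contains_madic_arc HU Hu) as (i & n & j & Hi & Hj & HUarc).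
  destruct (madic_arc_periodic_point Hi Hj) as [s [Hs Hper]].
  exists (h i (madic n j s)). split; [apply HUarc, Hs|]. exists (S n). split; [lia | exact Hper].
Qed.

(* Every neighbourhood contains a subarc mapped onto the whole graph, in particular onto
   both end points of edge [0]; one of them is far from the image of the centre. *)
Lemma graph_map_sensitive : sensitive d graph_map.
Proof.
  pose proof (edge_count_pos Hg) as Hr.
  set (a := h 0%nat 0). set (b := h 0%nat 1).
  assert (Hab : 0 < d a b).
  { apply (metric_gt0 Hm). intros Hab. assert (Hg01 : g 0%nat a = g 0%nat b) by (rewrite Hab; reflexivity).
    unfold a, b in Hg01. rewrite !(edge_g_h Hg) in Hg01; lia || lra. }
  exists (d a b / 3). split; [lra|]. intros x N [eps [He HN]].
  destruct (open_contains_madic_arc (ball_open Hm (c := x) (e := eps)) (u := x) ltac:(cbv beta; rewrite (metric_xx Hm); exact He))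
    as (i & n & j & Hi & Hj & Harc).
  set (z := iter (S n) graph_map x).
  destruct (Rlt_dec (d a b / 3) (d z a)) as [Hza|Hza].
  - destruct (iter_graph_map_madic_onto a Hi Hj) as [s [Hs Hy]].
    exists (h i (madic n j s)), (S n). split; [apply HN, Harc, Hs|]. fold z. rewrite Hy. lra.
  - destruct (iter_graph_map_madic_onto b Hi Hj) as [s [Hs Hy]].
    exists (h i (madic n j s)), (S n). split; [apply HN, Harc, Hs|]. fold z. rewrite Hy.
    pose proof (metric_triangle Hm a z b). rewrite (metric_sym Hm a z) in *. lra.
Qed.

Definition basic_ball (m : nat) (y : X) : Prop :=
  let '(i, n, j, k) := decode4 m in d (h i (madic n j 0)) y < / INR (S k).

Lemma basic_ball_open m : is_open d (basic_ball m).
Proof. unfold basic_ball. destruct (decode4 m) as [[[i n] j] k]. apply (ball_open Hm). Qed.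

Lemma basic_ball_nonempty m : exists y, basic_ball m y.
Proof.
  unfold basic_ball. destruct (decode4 m) as [[[i n] j] k].
  exists (h i (madic n j 0)). rewrite (metric_xx Hm). apply Rinv_0_lt_compat, lt_0_INR. lia.
Qed.

(* The points [h i (madic n j 0)] are dense, so the basic balls form a countable base. *)
Lemma open_contains_basic_ball U u : is_open d U -> U u ->
  exists m, forall y, basic_ball m y -> U y.
Proof.
  intros HU Hu. destruct (HU u Hu) as [eps [He Hball]].
  destruct (open_contains_madic_arc (ball_open Hm (c := u) (e := eps / 2)) (u := u))
    as (i & n & j & Hi & Hj & Harc); [cbv beta; rewrite (metric_xx Hm); lra|].
  destruct (archimed_cor1 (eps / 2)) as [k [Hk Hk0]]; [lra|].
  destruct (decode4_onto i n j (k - 1)) as [m Hm'].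
  exists m. unfold basic_ball. rewrite Hm'. intros y Hy. apply Hball.
  replace (S (k - 1)) with k in Hy by lia.
  specialize (Harc 0 ltac:(lra)). pose proof (metric_triangle Hm u (h i (madic n j 0)) y). lra.
Qed.

Lemma interval_orbit_enters V a b : is_open d V -> (exists v, V v) -> 0 <= a < b -> b <= 1 ->
  exists a' b', a <= a' < b' /\ b' <= b /\
    forall s, a' <= s <= b' -> exists N, V (iter N graph_map (h 0%nat s)).
Proof.
  intros HV [v Hv] Hab Hb. pose proof (edge_count_pos Hg) as Hr.
  destruct (madic_near (c := (a + b) / 2) (del := (b - a) / 2)) as (n & j & Hj & Hnear); [lra|lra|].
  destruct (iter_graph_map_madic_onto (i := 0) v ltac:(lia) Hj) as [s0 [Hs0 Hv0]].
  pose proof (Hnear s0 Hs0) as Hnear0. set (t0 := madic n j s0) in *.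
  assert (Ht0 : a < t0 < b) by (apply Rabs_def2 in Hnear0; lra).
  destruct (HV v Hv) as [eps [He Hball]].
  destruct (@iter_continuous _ d graph_map (S n) graph_map_cont (h 0%nat t0) eps He) as [d1 [Hd1 Hiter]].
  destruct (edge_h_cont Hg (i := 0%nat) ltac:(lia) (t := t0) ltac:(lra) Hd1) as [d2 [Hd2 Hh]].
  exists (Rmax a (t0 - d2 / 2)), (Rmin b (t0 + d2 / 2)).
  split; [split; [apply Rmax_l | unfold Rmax, Rmin; repeat destruct Rle_dec; lra]|].
  split; [apply Rmin_l|]. intros s Hs. exists (S n). apply Hball. rewrite <- Hv0. apply Hiter, Hh.
  - pose proof (Rmax_l a (t0 - d2 / 2)); pose proof (Rmin_l b (t0 + d2 / 2)); lra.
  - pose proof (Rmax_r a (t0 - d2 / 2)); pose proof (Rmin_r b (t0 + d2 / 2)).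
    apply Rabs_def1; lra.
Qed.

Lemma graph_map_dense_orbit : has_dense_orbit d graph_map.
Proof.
  destruct (nested_intervals_common_point (Q :=
    fun m s => exists N, basic_ball m (iter N graph_map (h 0%nat s)))) as [s Hs].
  { intros m a b Hab Hb.
    exact (interval_orbit_enters (basic_ball_open (m := m)) (basic_ball_nonempty m) Hab Hb). }
  exists (h 0%nat s). intros U HU [u Hu].
  destruct (open_contains_basic_ball HU Hu) as [m HmU].
  destruct (Hs m) as [N HN]. exists N. apply HmU, HN.
Qed.

End WalkMap.

Lemma finite_graph_chaotic_map : exists F : X -> X,
  continuous d F /\ onto F /\ top_transitive d F /\ has_dense_orbit d F /\
  dense_periodic d F /\ chaotic d F.
Proof.
  destruct closed_walk_covering as (w & M & Hw & Hcov).
  exists (graph_map w M).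
  pose proof (graph_map_onto Hw Hcov). pose proof (graph_map_transitive Hw Hcov).
  pose proof (graph_map_dense_periodic Hw Hcov).
  repeat split; auto using graph_map_cont, graph_map_dense_orbit, graph_map_sensitive.
Qed.

End Graph.

Theorem mainTheorem10 (X : Type) (d : X -> X -> R)
  (Hcont : is_continuum d) (Hgraph : is_finite_graph d) :
  exists F : X -> X,
    continuous d F /\ onto F /\ top_transitive d F /\ has_dense_orbit d F /\
    dense_periodic d F /\ chaotic d F.
Proof.
  destruct Hcont as (Hm & _ & _ & Hconn).
  destruct (finite_graph_param Hgraph) as (r & E & h & g & Hg).
  exact (finite_graph_chaotic_map Hm Hconn Hg).
Qed.
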